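(* Let $S=\begin{pmatrix}A&B\\C&D\end{pmatrix}\in\mathrm{Sp}(d,\mathbb R)$. Then $\mathbb R^d=\ker(B)^\perp\oplus D^TA(\ker(B))$.
   Context: $\mathrm{Sp}(d,\mathbb R)$ is the group of real $2d\times 2d$ matrices $S$ with $S^TJS=J$, $J=\begin{pmatrix}0_d&I_d\\-I_d&0_d\end{pmatrix}$, written in $d\times d$ blocks $A,B,C,D$. $\ker(B)^\perp$ is the orthogonal complement of the kernel of $B$ for the standard inner product; $\oplus$ denotes a (not necessarily orthogonal) direct sum. *)

(* Vectors of R^n are represented as row vectors 'rV_n, and
   subspaces as row spaces of matrices (mxalgebra, scope %MS). *)
From HB Require Import structures.
From mathcomp Require Import all_boot all_order all_algebra.
Set Implicit Arguments. Unset Strict Implicit. Unset Printing Implicit Defensive.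
Import Order.TTheory GRing.Theory Num.Theory.
Local Open Scope ring_scope.

Definition Jmx (R : ringType) (d : nat) : 'M[R]_(d + d) :=
  block_mx 0 1%:M (- 1%:M) 0.

Definition symplectic (R : comRingType) (d : nat) (S : 'M[R]_(d + d)) : Prop :=
  S^T *m Jmx R d *m S = Jmx R d.

(* ker M = { x | M x = 0 } (x a column vector), as a row space:
   x^T M^T = 0. *)
Definition kerc (R : fieldType) (m n : nat) (M : 'M[R]_(m, n)) : 'M[R]_n :=
  kermx M^T.

(* Orthogonal complement (standard inner product) of the row space of V:
   the u with <u, v> = 0 for all rows v of V, i.e. u *m V^T = 0. *)
Definition orthc (R : fieldType) (k n : nat) (V : 'M[R]_(k, n)) : 'M[R]_n :=
  kermx V^T.

(* Image M(V) of the subspace V (row space) under x |-> M x. *)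
Definition imgc (R : fieldType) (k m n : nat) (M : 'M[R]_(n, m))
  (V : 'M[R]_(k, m)) : 'M[R]_(k, n) := V *m M^T.

(** If [T x - x] lies in [K^perp] for every [x] in a subspace [K], then
    [K + K^perp <= K^perp + T K]; since [K + K^perp] is the whole space
    (positivity of the real inner product), so is [K^perp + T K], and the sum
    is direct because [dim T K <= dim K = n - dim K^perp]. For symplectic [S],
    the off-diagonal block of [S^T J S = J] reads [A^T D - C^T B = 1], so
    [T = D^T A] satisfies [T x - x = B^T C x] in [range B^T = (ker B)^perp]
    for [x] in [K = ker B]. Vectors are encoded as rows, so [T K] is
    [K *m T^T] and [T^T = A^T D]. *)
From HB Require Import structures.
From mathcomp Require Import all_boot all_order all_algebra.
Set Implicit Arguments. Unset Strict Implicit. Unset Printing Implicit Defensive.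
Import Order.TTheory GRing.Theory Num.Theory.
Local Open Scope ring_scope.

Lemma symplectic_block_trAD (R : comNzRingType) (d : nat) (A B C D : 'M[R]_d) :
  symplectic (block_mx A B C D) -> A^T *m D = 1%:M + C^T *m B.
Proof.
rewrite /symplectic /Jmx tr_block_mx !mulmx_block => /eq_block_mx [_ + _ _].
rewrite !(mulmx0, mul0mx, mulmx1, mul1mx, mulmxN, mulNmx, add0r, addr0).
by move=> <-; rewrite addrC addNKr.
Qed.

Lemma mulmx_tr_eq0 (R : realFieldType) (m n : nat) (M : 'M[R]_(m, n)) :
  (M *m M^T == 0) = (M == 0).
Proof.
apply/eqP/eqP => [MMt0|->]; last by rewrite mul0mx.
apply/matrixP => i j; rewrite mxE.
have /eqP := congr1 (fun N : 'M_m => N i i) MMt0.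
rewrite !mxE (eq_bigr (fun k => M i k ^+ 2)) => [|k _]; last by rewrite mxE.
rewrite psumr_eq0 => [/allP/(_ j (mem_index_enum j))|k _]; last exact: sqr_ge0.
by rewrite sqrf_eq0 => /eqP.
Qed.

Lemma mxrank_orthc (R : fieldType) (k n : nat) (V : 'M[R]_(k, n)) :
  \rank (orthc V) = (n - \rank V)%N.
Proof. by rewrite /orthc mxrank_ker mxrank_tr. Qed.

Lemma capmx_orthc (R : realFieldType) (k n : nat) (V : 'M[R]_(k, n)) :
  (V :&: orthc V = 0)%MS.
Proof.
set W := (V :&: orthc V)%MS.
have /submxP [X WX] : (W <= V)%MS by apply: capmxSl.
have : (W <= orthc V)%MS by apply: capmxSr.
rewrite sub_kermx => /eqP WVt0.
by apply/eqP; rewrite -mulmx_tr_eq0 {2}WX trmx_mul mulmxA WVt0 mul0mx.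
Qed.

Lemma addsmx_orthc_full (R : realFieldType) (k n : nat) (V : 'M[R]_(k, n)) :
  row_full (V + orthc V).
Proof.
apply/eqP; have := mxrank_sum_cap V (orthc V).
rewrite capmx_orthc mxrank0 addn0 mxrank_orthc => ->.
by rewrite subnKC ?rank_leq_col.
Qed.

Lemma mxdirect_adds_full (R : fieldType) (m1 m2 n : nat)
    (U : 'M[R]_(m1, n)) (W : 'M[R]_(m2, n)) :
  row_full (U + W) -> (\rank U + \rank W <= n)%N -> mxdirect (U + W).
Proof.
move=> /eqP fullUW le_rank; have [le_sum _] := mxrank_adds_leqif U W.
by rewrite mxdirectE /= eqn_leq le_sum fullUW.
Qed.

Lemma orthc_adds_mulmx (R : realFieldType) (k n : nat)
    (V : 'M[R]_(k, n)) (M : 'M[R]_n) :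
  (V *m M - V <= orthc V)%MS ->
  (orthc V + V *m M == 1%:M)%MS /\ mxdirect (orthc V + V *m M).
Proof.
move=> VM_V; have sub_sum : (V + orthc V <= orthc V + V *m M)%MS.
  rewrite addsmx_sub addsmxSl andbT -{1}(subKr (V *m M) V) addrC.
  by rewrite addmx_sub_adds // eqmx_opp.
have full : row_full (orthc V + V *m M).
  by rewrite -sub1mx (submx_trans _ sub_sum) ?sub1mx ?addsmx_orthc_full.
split; first by rewrite /eqmx submx1 sub1mx.
apply: mxdirect_adds_full full _.
rewrite (leq_trans (leq_add (leqnn _) (mxrankM_maxl V M))) //.
by rewrite mxrank_orthc subnK ?rank_leq_col.
Qed.

Lemma submx_orthc_kerc (R : fieldType) (m n : nat) (B : 'M[R]_(m, n)) :
  (B <= orthc (kerc B))%MS.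
Proof. by rewrite sub_kermx -[B in B *m _]trmxK -trmx_mul mulmx_ker trmx0. Qed.

Theorem lemma3p6 (R : realFieldType) (d : nat) (A B C D : 'M[R]_d) :
  symplectic (block_mx A B C D) ->
  (orthc (kerc B) + imgc (D^T *m A) (kerc B) == 1%:M)%MS /\
  mxdirect (orthc (kerc B) + imgc (D^T *m A) (kerc B)).
Proof.
move=> /symplectic_block_trAD trAD; apply: orthc_adds_mulmx.
rewrite trmx_mul trmxK trAD mulmxDr mulmx1 addrAC subrr add0r mulmxA.
exact: submx_trans (submxMl _ B) (submx_orthc_kerc B).
Qed.
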